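(* The matroid $V_{10}/5$ (which is isomorphic to $V_{10}/7$) has the half-plane property; equivalently, the polynomial $\frac{\partial f_{10}}{\partial x_5}$ is stable.
   Context: $V_{10}$ is the matroid on $\{1,\dots,10\}$ whose bases are all $4$-element subsets of $\{1,\dots,10\}$ except $\{1,2,3,4\},\{1,2,5,6\},\{1,2,7,8\},\{1,2,9,10\},\{3,4,5,6\},\{5,6,7,8\},\{7,8,9,10\}$, and $f_{10}=\sum_{B}\prod_{i\in B}x_i$ (sum over bases $B$ of $V_{10}$) is its basis generating polynomial. For a matroid $M$ and element $e$, the contraction $M/e$ has as bases the sets $B\setminus\{e\}$ for bases $B$ of $M$ containing $e$; its basis generating polynomial is the partial derivative with respect to $x_e$ of that of $M$. A homogeneous real polynomial $f$ is stable if for all vectors $v$ with all entries positive and all real vectors $w$, $f(tv+w)\in\mathbb{R}[t]$ has only real roots; a matroid has the half-plane property if its basis generating polynomial is stable. *)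

From HB Require Import structures.
From mathcomp Require Import all_boot all_order all_algebra.
From mathcomp Require Import mpoly.
From mathcomp Require Import complex.
From Stdlib Require Import Reals.
From mathcomp Require Import Rstruct.

Set Implicit Arguments. Unset Strict Implicit. Unset Printing Implicit Defensive.
Import Order.TTheory GRing.Theory Num.Theory.
Local Open Scope ring_scope.

(* Ground set {1,...,10} is encoded as 'I_10 : element k is (k-1 : 'I_10). *)
Definition e10 (k : nat) : 'I_10 := inord k.-1.

Definition V10_nonbases : seq {set 'I_10} :=
  [:: [set e10 1; e10 2; e10 3; e10 4];
      [set e10 1; e10 2; e10 5; e10 6];
      [set e10 1; e10 2; e10 7; e10 8];
      [set e10 1; e10 2; e10 9; e10 10];
      [set e10 3; e10 4; e10 5; e10 6];
      [set e10 5; e10 6; e10 7; e10 8];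
      [set e10 7; e10 8; e10 9; e10 10]].

Definition V10_basis (B : {set 'I_10}) : bool :=
  (#|B| == 4)%N && (B \notin V10_nonbases).

Definition f10 : {mpoly R[10]} :=
  \sum_(B : {set 'I_10} | V10_basis B) \prod_(i in B) 'X_i.

Definition restrict_line (n : nat) (f : {mpoly R[n]}) (v w : 'I_n -> R) : {poly R} :=
  (map_mpoly (polyC : R -> {poly R}) f).@[fun i => 'X * (v i)%:P + (w i)%:P].

Definition stable (n : nat) (f : {mpoly R[n]}) : Prop :=
  forall v w : 'I_n -> R, (forall i, 0 < v i) ->
    forall z : R[i], root (map_poly (fun c : R => (c%:C)%C) (restrict_line f v w)) z ->
      complex.Im z = 0.

(* A complex root z of t |-> (df_10/dx_5)(t v + w) makes the sum, over the bases B of V_10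
   containing 5, of the monomials prod_(j in B, j <> 5) y_j vanish, where y_j = z v_j + w_j.
   That sum is G := e_3(y_j : j <> 5) - y1 y2 y6 - y3 y4 y6 - y6 y7 y8.  If Im z <> 0, all
   the y_j lie in one open half-plane H, and 4 G is the coefficient of s^3 of the monic sextic
     Q(s) = prod_k (s + a_k + b_k)
            * (s + 4 y6 + sum_k (s (a_k + b_k) + 4 a_k b_k) / (s + a_k + b_k))
   with blocks (a_k, b_k) = (y1, y2), (y3, y4), (y7, y8), (y9, 0), (y10, 0).  Each fraction
   maps the closure of H into itself (an explicit sum of squares), so Q has no zero there;
   by Gauss-Lucas neither has Q''', whose value at 0 is 24 G. *)

From HB Require Import structures.
From mathcomp Require Import all_boot all_order all_algebra.
From mathcomp Require Import mpoly.
From mathcomp Require Import complex.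
From Stdlib Require Import Reals.
From mathcomp Require Import Rstruct.
From mathcomp Require Import ring lra.
Set Implicit Arguments. Unset Strict Implicit. Unset Printing Implicit Defensive.
Import Order.TTheory GRing.Theory Num.Theory.
Local Open Scope ring_scope.

Definition contr_prod (T : finType) (K : comNzRingType) (i : T) (Y : T -> K)
    (B : {set T}) : K :=
  if i \in B then \prod_(j in B | j != i) Y j else 0.

Section MDerivProd.
Variables (n : nat) (K : comNzRingType).

Lemma mderivXU (i j : 'I_n) : mderiv i ('X_j : {mpoly K[n]}) = (j == i)%:R.
Proof.
rewrite mderivX mnm1E; have [->|ji] := eqVneq j i; last by rewrite scale0r.
have -> : (U_(i) - U_(i))%MM = 0%MM by apply/mnmP=> k; rewrite !mnmE subnn.
by rewrite mpolyX0 scale1r.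
Qed.

Lemma mderiv_prodX (i : 'I_n) (B : {set 'I_n}) :
  mderiv i (\prod_(j in B) ('X_j : {mpoly K[n]})) = contr_prod i (fun j => 'X_j) B.
Proof.
have mderiv_prod0 (P : pred 'I_n) :
    ~~ P i -> mderiv i (\prod_(j | P j) ('X_j : {mpoly K[n]})) = 0.
  move=> Pi; apply: (big_ind (fun p : {mpoly K[n]} => mderiv i p = 0)).
  - by rewrite -mpolyC1 mderivC.
  - by move=> p q dp dq; rewrite mderivM dp dq mul0r mulr0 addr0.
  - by move=> j Pj; rewrite mderivXU; case: eqP => // ji; rewrite -ji Pj in Pi.
rewrite /contr_prod; case: ifPn => iB; last exact: mderiv_prod0.
rewrite (bigD1 i) //= mderivM mderivXU eqxx mul1r mderiv_prod0 ?mulr0 ?addr0 //=.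
by rewrite eqxx andbF.
Qed.

End MDerivProd.

Lemma horner_map_meval (K L : comNzRingType) (phi : {rmorphism K -> L}) (n : nat)
    (f : {mpoly K[n]}) (x : 'I_n -> {poly K}) (z : L) :
  (map_poly phi (map_mpoly polyC f).@[x]).[z] =
  (map_mpoly phi f).@[fun i => (map_poly phi (x i)).[z]].
Proof.
elim/mpolyind: f => [|c m p _ _ IH]; first by rewrite !raddf0 horner0.
rewrite !(raddfD, mevalD) hornerD; congr (_ + _); last exact: IH.
rewrite /= !map_mpolyZ !map_mpolyX !mevalZ !mevalX rmorphM hornerM rmorph_prod.
rewrite horner_prod /= map_polyC hornerC; congr (_ * _); apply: eq_bigr => i _.
by rewrite rmorphXn horner_exp.
Qed.

Lemma horner_restrict_line (n : nat) (f : {mpoly R[n]}) (v w : 'I_n -> R) (z : R[i]) :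
  (map_poly (real_complex R) (restrict_line f v w)).[z] =
  (map_mpoly (real_complex R) f).@[fun i => z * (v i)%:C + (w i)%:C]%C.
Proof.
rewrite horner_map_meval; apply: meval_eq => i.
by rewrite rmorphD rmorphM /= map_polyX !map_polyC !hornerE.
Qed.

Lemma mderiv_f10 :
  mderiv (e10 5) f10 = \sum_(B | V10_basis B) contr_prod (e10 5) (fun j => 'X_j) B.
Proof. by rewrite raddf_sum; apply: eq_bigr => B _; apply: mderiv_prodX. Qed.

Lemma root_restrict_mderiv_f10 (v w : 'I_10 -> R) (z : R[i]) :
  root (map_poly (real_complex R) (restrict_line (mderiv (e10 5) f10) v w)) z ->
  \sum_(B | V10_basis B) contr_prod (e10 5) (fun j => z * (v j)%:C + (w j)%:C)%C B = 0.
Proof.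
rewrite /root horner_restrict_line mderiv_f10 [map_mpoly _ _]rmorph_sum rmorph_sum.
move=> /eqP Em; rewrite -[RHS]Em; apply: eq_bigr => B _.
rewrite /contr_prod; case: ifP => _; last by rewrite !rmorph0.
by rewrite !rmorph_prod; apply: eq_bigr => j _; rewrite /= map_mpolyX mevalXU.
Qed.

Lemma sum_contr_prod_card (T : finType) (K : comNzRingType) (Y : T -> K) (i : T) (k : nat) :
  \sum_(B : {set T} | #|B| == k.+1) contr_prod i Y B =
  (\prod_(j | j != i) ((Y j)%:P * 'X + 1))`_k.
Proof.
(* Expand ['X * \prod_(j != i) (Y j X + 1)] over the subsets [B] of [T]: the
   factor ['X] at [i] forces [i \in B] and raises the degree to [#|B|]. *)
pose F1 j : {poly K} := (if j == i then 1 else Y j)%:P * 'X.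
pose F2 j : {poly K} := if j == i then 0 else 1.
have prodF : \prod_j (F1 j + F2 j) = 'X * \prod_(j | j != i) ((Y j)%:P * 'X + 1).
  rewrite (bigD1 i) //= /F1 /F2 eqxx polyC1 mul1r addr0; congr (_ * _).
  by apply: eq_bigr => j /negbTE ->.
have termF (B : {set T}) : \prod_j (if j \in B then F1 j else F2 j) =
    (contr_prod i Y B)%:P * 'X^#|B|.
  rewrite /contr_prod; case: ifPn => iB; last first.
    by rewrite (bigD1 i) //= (negbTE iB) /F2 eqxx mul0r mul0r.
  rewrite (bigID (mem B)) /= [X in _ * X]big1 => [|j jB]; last first.
    by rewrite (negbTE jB) /F2 ifN //; apply: contraNneq jB => ->.
  rewrite mulr1 (eq_bigr F1) => [|j ->] //.
  rewrite big_split /= prodr_const -rmorph_prod (bigD1 i) //= /F1 eqxx mul1r.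
  by congr (_%:P * _); apply: eq_bigr => j /andP[_ /negbTE ->].
rewrite -[RHS](coefXM _ k.+1) -prodF bigA_distr coef_sum big_mkcond; apply: eq_bigr => B _.
by rewrite termF coefCM coefXn eq_sym; case: eqP; rewrite ?mulr1 ?mulr0.
Qed.

Fixpoint esym_seq (K : pzSemiRingType) (s : seq K) (k : nat) : K :=
  match s, k with
  | [::], 0 => 1
  | [::], _.+1 => 0
  | _ :: s', 0 => esym_seq s' 0
  | a :: s', k'.+1 => esym_seq s' k + a * esym_seq s' k'
  end.

Lemma coef_prod_CXadd1 (K : comNzRingType) (s : seq K) (k : nat) :
  (\prod_(a <- s) (a%:P * 'X + 1))`_k = esym_seq s k.
Proof.
elim: s k => [|a s IH] [|k]; rewrite ?big_nil ?coef1 // big_cons -[X in _ * 'X + X]polyC1.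
- by rewrite mulrDl -mulrA coefD !coefCM coefXM mulr0 add0r mul1r IH.
- by rewrite mulrDl -mulrA coefD !coefCM coefXM mul1r !IH addrC.
Qed.

Lemma eq_e10 (a b : nat) : (a <= 10)%nat -> (b <= 10)%nat ->
  (e10 a == e10 b) = (a.-1 == b.-1).
Proof. by case: a => [|a] ha; case: b => [|b] hb; rewrite -val_eqE /= !inordK. Qed.

Lemma mem_e10_set4 (k a b c d : nat) :
  all (fun m => m <= 10)%nat [:: k; a; b; c; d] ->
  (e10 k \in [set e10 a; e10 b; e10 c; e10 d]) = (k.-1 \in [:: a.-1; b.-1; c.-1; d.-1]).
Proof. by case/and5P=> hk ha hb hc /andP[hd _]; rewrite !inE !eq_e10 ?orbA. Qed.

Lemma big_e10 (K : Type) (idx : K) (op : K -> K -> K) (F : 'I_10 -> K) :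
  \big[op/idx]_(i < 10) F i = \big[op/idx]_(k <- iota 1 10) F (e10 k).
Proof.
rewrite (eq_bigr (fun i => F (inord (val i)))) => [|i _]; last by rewrite inord_val.
rewrite -(big_mkord xpredT (fun k => F (inord k))).
by rewrite -[iota 1 10]/(iota (1 + 0) 10) iotaDl big_map.
Qed.

Lemma prod_neq_e10_5 (K : comNzRingType) (G : 'I_10 -> K) :
  \prod_(i | i != e10 5) G i = \prod_(k <- [:: 1; 2; 3; 4; 6; 7; 8; 9; 10]) G (e10 k).
Proof. by rewrite big_mkcond big_e10 /= !big_cons !big_nil !eq_e10 //= mul1r. Qed.

Lemma uniq_V10_nonbases : uniq V10_nonbases.
Proof.
(* The nonbases are already told apart by which of 1, 3, 5, 7, 9 they contain. *)
apply: (@map_uniq _ _ (fun B : {set 'I_10} => [seq e10 k \in B | k <- [:: 1; 3; 5; 7; 9]])).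
by rewrite /V10_nonbases !map_cons -[map _ [::]]/[::] !mem_e10_set4.
Qed.

Section V10Contraction.
Variables (K : comNzRingType) (Y : 'I_10 -> K).
Local Notation y k := (Y (e10 k)).

Lemma contr_prod_e10_5 (B : {set 'I_10}) :
  contr_prod (e10 5) Y B = if e10 5 \in B then
    \prod_(k <- [:: 1; 2; 3; 4; 6; 7; 8; 9; 10]) (if e10 k \in B then y k else 1) else 0.
Proof. by rewrite /contr_prod; case: ifP => // _; rewrite big_mkcondl prod_neq_e10_5. Qed.

Lemma card_e10 (B : {set 'I_10}) : #|B| = count (fun k => e10 k \in B) (iota 1 10).
Proof. by rewrite -sum1_card big_mkcond big_e10 -big_mkcond sum1_count. Qed.

Lemma sum_contr_prod_V10_nonbases :
  \sum_(B <- V10_nonbases) (if #|B| == 4 then contr_prod (e10 5) Y B else 0) =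
  y 1 * y 2 * y 6 + y 3 * y 4 * y 6 + y 6 * y 7 * y 8.
Proof.
rewrite /V10_nonbases !big_cons big_nil !contr_prod_e10_5 !card_e10 /=.
rewrite !big_cons !big_nil !mem_e10_set4 //=.
by rewrite !(mul1r, mulr1, addr0, add0r) !mulrA addrA.
Qed.

Lemma sum_contr_prod_V10_bases :
  \sum_(B | V10_basis B) contr_prod (e10 5) Y B =
  esym_seq [seq y k | k <- [:: 1; 2; 3; 4; 6; 7; 8; 9; 10]] 3 -
  (y 1 * y 2 * y 6 + y 3 * y 4 * y 6 + y 6 * y 7 * y 8).
Proof.
rewrite -coef_prod_CXadd1 big_map -(prod_neq_e10_5 (fun j => (Y j)%:P * 'X + 1)).
rewrite -sum_contr_prod_card; set S := LHS.
rewrite (bigID (mem V10_nonbases)) /= -/S.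
rewrite (eq_bigl (fun B => (B \in V10_nonbases) && (#|B| == 4))) => [|B]; last first.
  exact: andbC.
rewrite big_mkcondr -big_uniq ?uniq_V10_nonbases // sum_contr_prod_V10_nonbases.
by rewrite addrC addrK.
Qed.

End V10Contraction.

Section LinearFactorCoef.
Variable K : comNzRingType.
Implicit Types (a c : K) (p : {poly K}).

Lemma coefS_XaddCM c p k : (('X + c%:P) * p)`_k.+1 = p`_k + c * p`_k.+1.
Proof. by rewrite mulrDl coefD coefXM coefCM. Qed.

Lemma coef0_XaddCM c p : (('X + c%:P) * p)`_0 = c * p`_0.
Proof. by rewrite mulrDl coefD coefXM coefCM add0r. Qed.

Lemma coefS_CXaddCM a c p k : ((a%:P * 'X + c%:P) * p)`_k.+1 = a * p`_k + c * p`_k.+1.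
Proof. by rewrite mulrDl -mulrA coefD !coefCM coefXM. Qed.

Lemma coef0_CXaddCM a c p : ((a%:P * 'X + c%:P) * p)`_0 = c * p`_0.
Proof. by rewrite mulrDl -mulrA coefD !coefCM coefXM mulr0 add0r. Qed.

End LinearFactorCoef.

Section BlockPoly.
Variable F : fieldType.
Implicit Types (s a b c : F) (ab : seq (F * F)).

Definition pair_frac s a b : F := (s * (a + b) + 4%:R * a * b) / (s + a + b).

Fixpoint block_poly c ab : {poly F} :=
  if ab is (a, b) :: ab' then
    ('X + (a + b)%:P) * block_poly c ab' +
    ((a + b)%:P * 'X + (4%:R * a * b)%:P) * \prod_(q <- ab') ('X + (q.1 + q.2)%:P)
  else 'X + c%:P.

Lemma size_prod_XaddC ab : size (\prod_(q <- ab) ('X + (q.1 + q.2)%:P)) = (size ab).+1.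
Proof.
rewrite (eq_bigr (fun q => 'X - (- (q.1 + q.2))%:P)) => [|q _]; last by rewrite polyCN opprK.
exact: size_prod_XsubC.
Qed.

Lemma block_poly_monic_size c ab :
  block_poly c ab \is monic /\ size (block_poly c ab) = (size ab).+2.
Proof.
elim: ab => [|[a b] ab [mQ sQ]] /=; first by rewrite monicXaddC size_XaddC.
pose DQ := ('X + (a + b)%:P) * block_poly c ab.
pose NP := ((a + b)%:P * 'X + (4%:R * a * b)%:P) * \prod_(q <- ab) ('X + (q.1 + q.2)%:P).
have sDQ : size DQ = (size ab).+3.
  by rewrite size_monicM ?monicXaddC ?monic_neq0 // size_XaddC sQ.
have NP_DQ : (size NP < size DQ)%nat.
  rewrite sDQ; apply: leq_ltn_trans (size_mul_leq _ _) _.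
  rewrite size_prod_XaddC size_MXaddC addnS /= -[(size ab).+3]/(3 + size ab) ltn_add2r.
  by case: ifP => // _; rewrite !ltnS size_polyC_leq1.
rewrite -/DQ -/NP; split; last by rewrite size_addl.
by rewrite monicE lead_coefDl // -monicE monicMl ?monicXaddC.
Qed.

Lemma horner_block_poly c ab s : all (fun q => s + q.1 + q.2 != 0) ab ->
  (block_poly c ab).[s] =
  \prod_(q <- ab) (s + q.1 + q.2) * (s + c + \sum_(q <- ab) pair_frac s q.1 q.2).
Proof.
elim: ab => [|[a b] ab IH] /=; first by rewrite !big_nil hornerD hornerX hornerC mul1r addr0.
case/andP=> Dab /IH {}IH; rewrite hornerD !hornerM IH.
have -> : (\prod_(q <- ab) ('X + (q.1 + q.2)%:P)).[s] = \prod_(q <- ab) (s + q.1 + q.2).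
  by rewrite horner_prod; apply: eq_bigr => q _; rewrite hornerD hornerX hornerC addrA.
rewrite !big_cons /= !hornerD hornerX !hornerC hornerM hornerX hornerC.
by rewrite /pair_frac; field.
Qed.

End BlockPoly.

Lemma horner_deriv_prod_XsubC (F : fieldType) (rs : seq F) (s : F) : s \notin rs ->
  (\prod_(r <- rs) ('X - r%:P))^`().[s] / (\prod_(r <- rs) ('X - r%:P)).[s] =
  \sum_(r <- rs) (s - r)^-1.
Proof.
elim: rs => [|r rs IH]; first by rewrite !big_nil derivC horner0 mul0r.
rewrite inE negb_or => /andP[sr srs].
have qs : (\prod_(r <- rs) ('X - r%:P)).[s] != 0.
  by rewrite -[_ != 0]/(~~ root _ s) root_prod_XsubC.
rewrite !big_cons derivM derivXsubC mul1r -IH // hornerD !hornerM !hornerXsubC.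
by field; rewrite qs subr_eq0 sr.
Qed.

Section HalfPlane.
Variable R : rcfType.
Implicit Types (y : R) (x s a b : R[i]).
Local Notation Re := (@complex.Re R).
Local Notation Im := (@complex.Im R).

Lemma Im_div x s : Im (x / s) = (Im x * Re s - Re x * Im s) / (Re s ^+ 2 + Im s ^+ 2).
Proof. by case: x s => [a b] [c d] /=; ring. Qed.

Lemma halfplane_neq0 y x : 0 < y * Im x -> x != 0.
Proof. by apply: contraTneq => ->; rewrite mulr0 ltxx. Qed.

Lemma halfplane_inv y x : 0 < y * Im x -> y * Im x^-1 < 0.
Proof.
move=> yx; have Imx0 : Im x != 0 by apply: contraTneq yx => ->; rewrite mulr0 ltxx.
have nx : 0 < Re x ^+ 2 + Im x ^+ 2.
  by rewrite ltr_wpDl ?sqr_ge0 // lt_def sqrf_eq0 Imx0 sqr_ge0.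
rewrite -div1r Im_div /= mul0r mul1r sub0r mulNr mulrN mulrA oppr_lt0.
exact: divr_gt0.
Qed.

Lemma halfplane_pair_frac y s a b :
  0 <= y * Im s -> 0 <= y * Im a -> 0 <= y * Im b -> 0 <= y * Im (pair_frac s a b).
Proof.
move=> ys ya yb; rewrite /pair_frac Im_div mulrA divr_ge0 ?addr_ge0 ?sqr_ge0 //.
have -> : y * (Im (s * (a + b) + 4%:R * a * b) * Re (s + a + b) -
               Re (s * (a + b) + 4%:R * a * b) * Im (s + a + b)) =
    y * Im a * ((Re s + 2%:R * Re b) ^+ 2 + (Im s + 2%:R * Im b) ^+ 2) +
    y * Im b * ((Re s + 2%:R * Re a) ^+ 2 + (Im s + 2%:R * Im a) ^+ 2) +
    y * Im s * ((Re a - Re b) ^+ 2 + (Im a - Im b) ^+ 2).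
  case: s a b {ys ya yb} => [s1 s2] [a1 a2] [b1 b2] /=; ring.
by do 2?apply: addr_ge0; apply: mulr_ge0; rewrite // addr_ge0 ?sqr_ge0.
Qed.

Lemma halfplane_rootfree_deriv y (p : {poly R[i]}) : p^`() != 0 ->
  (forall s, 0 <= y * Im s -> ~~ root p s) ->
  forall s, 0 <= y * Im s -> ~~ root p^`() s.
Proof.
move=> dp0 p_free s ys.
have lp0 : lead_coef p != 0.
  by rewrite lead_coef_eq0; apply: contraNneq dp0 => ->; rewrite deriv0.
have [rs p_eq] := closed_field_poly_normal p.
have rs_lt0 r : r \in rs -> y * Im r < 0.
  move=> rrs; rewrite ltNge; apply/negP => /p_free.
  by rewrite p_eq rootZ // root_prod_XsubC rrs.
have s_rs : s \notin rs by apply/negP => /rs_lt0; rewrite ltNge ys.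
case: rs => [|r rs] in p_eq rs_lt0 s_rs *.
  by move: dp0; rewrite p_eq big_nil derivZ derivC scaler0 eqxx.
have inv_lt0 t : t \in r :: rs -> y * Im (s - t)^-1 < 0.
  by move=> /rs_lt0 yt; apply: halfplane_inv; rewrite raddfB mulrBr; lra.
rewrite p_eq derivZ rootZ //; apply/negP => /rootP dq0.
have := horner_deriv_prod_XsubC s_rs; rewrite dq0 mul0r => /(congr1 (fun x => y * Im x)).
rewrite raddf0 mulr0 raddf_sum mulr_sumr big_cons.
have := inv_lt0 r (mem_head r rs).
have : \sum_(t <- rs) y * Im (s - t)^-1 <= 0.
  by rewrite big_seq sumr_le0 // => t trs; rewrite ltW // inv_lt0 // inE trs orbT.
lra.
Qed.

Lemma halfplane_rootfree_derivn y (p : {poly R[i]}) n : p^`(n) != 0 ->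
  (forall s, 0 <= y * Im s -> ~~ root p s) ->
  forall s, 0 <= y * Im s -> ~~ root p^`(n) s.
Proof.
elim: n => [|n IH] dpn0 p_free; first by rewrite derivn0.
rewrite derivnS in dpn0 *; apply: halfplane_rootfree_deriv => //.
by apply: IH => //; apply: contraNneq dpn0 => ->; rewrite deriv0.
Qed.

Lemma block_poly_rootfree y c (ab : seq (R[i] * R[i])) s :
  0 < y * Im c -> all (fun q => (0 < y * Im q.1) && (0 <= y * Im q.2)) ab ->
  0 <= y * Im s -> ~~ root (block_poly c ab) s.
Proof.
move=> yc yab ys; have yD q : q \in ab -> 0 < y * Im (s + q.1 + q.2).
  by move/(allP yab)=> /andP[y1 y2]; rewrite !raddfD !mulrDr /=; lra.
rewrite /root horner_block_poly; last by apply/allP => q /yD/halfplane_neq0.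
rewrite mulf_eq0 negb_or prodf_seq_neq0; apply/andP; split.
  by apply/allP => q /yD/halfplane_neq0.
apply: (@halfplane_neq0 y); rewrite !raddfD raddf_sum !mulrDr mulr_sumr /=.
have : 0 <= \sum_(q <- ab) y * Im (pair_frac s q.1 q.2).
  rewrite big_seq sumr_ge0 // => q /(allP yab) /andP[y1 y2].
  by apply: halfplane_pair_frac => //; apply: ltW.
lra.
Qed.

End HalfPlane.

Section V10BlockPoly.
Variables (R : rcfType) (Y : 'I_10 -> R[i]).
Local Notation y k := (Y (e10 k)).

Definition block_poly_V10 : {poly R[i]} :=
  block_poly (4%:R * y 6) [:: (y 1, y 2); (y 3, y 4); (y 7, y 8); (y 9, 0); (y 10, 0)].

Lemma coef_block_poly_V10_3 : block_poly_V10`_3 = 4%:R *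
  (esym_seq [seq y k | k <- [:: 1; 2; 3; 4; 6; 7; 8; 9; 10]] 3 -
   (y 1 * y 2 * y 6 + y 3 * y 4 * y 6 + y 6 * y 7 * y 8)).
Proof.
rewrite /block_poly_V10 /= !big_cons !big_nil -polyC1.
rewrite !(coefD, coefS_XaddCM, coef0_XaddCM, coefS_CXaddCM, coef0_CXaddCM, coefX, coefC) /=.
ring.
Qed.

End V10BlockPoly.

Lemma sum_contr_prod_V10_bases_neq0 (R : rcfType) (Y : 'I_10 -> R[i]) (y : R) :
  (forall j, 0 < y * complex.Im (Y j)) ->
  \sum_(B | V10_basis B) contr_prod (e10 5) Y B != 0.
Proof.
move=> yY; set Q := block_poly_V10 Y.
have Q_free s : 0 <= y * complex.Im s -> ~~ root Q s.
  apply: block_poly_rootfree; first by have := yY (e10 6); case: (Y (e10 6)) => a b /=; lra.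
  by rewrite /= !yY !(ltW (yY _)) mulr0 lexx.
have dQ3 : Q^`(3) != 0.
  have [mQ sQ] : Q \is monic /\ size Q = 7 := block_poly_monic_size _ _.
  apply/eqP => /(congr1 (fun p : {poly R[i]} => p`_3)); rewrite coef_derivn coef0.
  by move: mQ; rewrite monicE lead_coefE sQ => /eqP -> /eqP; rewrite pnatr_eq0.
have := halfplane_rootfree_derivn dQ3 Q_free (s := 0).
rewrite raddf0 mulr0 lexx /root horner_coef0 coef_derivn addn0 coef_block_poly_V10_3.
rewrite sum_contr_prod_V10_bases => /(_ isT); apply: contra => /eqP ->.
by rewrite mulr0 mul0rn.
Qed.

Theorem lemma4p3 : stable (mderiv (e10 5) f10).
Proof.
move=> v w vpos z /root_restrict_mderiv_f10 /eqP; apply: contraTeq => Imz0.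
apply: (sum_contr_prod_V10_bases_neq0 (y := complex.Im z)) => j.
have -> : complex.Im (z * (v j)%:C + (w j)%:C)%C = complex.Im z * v j.
  by case: z {Imz0} => a b /=; ring.
by rewrite mulrA -expr2 mulr_gt0 // exprn_even_gt0.
Qed.
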